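(* Let $G=(V,E)$ be a connected graph on $n\geq 4$ vertices with $V=\{p_1,\ldots,p_{n-1},q\}$, where $p_1-p_2-\cdots-p_{n-1}$ is a path in $G$, and let $N(q)=\{p_{i_1},\ldots,p_{i_t}\}$. If $\psi_{n-1}(G)=2$ and $\psi_n(G)=0$, then: (1) $d(p_1)\geq 2$ and $d(p_{n-1})\geq 2$; (2) $p_1p_{n-1}\notin E$, $qp_1\notin E$, $qp_{n-1}\notin E$, and for all $i\in\{2,\ldots,n-2\}$, if $qp_i\in E$ then $qp_{i+1}\notin E$; (3) $p_1p_{i_j+1}\notin E$ and $p_{n-1}p_{i_j-1}\notin E$ for all $j\in\{1,\ldots,t\}$; (4) $p_1p_{i_j-1}\notin E$ for all $j$ with $i_j>\min\{i_1,\ldots,i_t\}$, and $p_{n-1}p_{i_j+1}\notin E$ for all $j$ with $i_j<\max\{i_1,\ldots,i_t\}$.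
   Context: All graphs are finite and simple. For a graph $G$ and a positive integer $k$, a $k$-path vertex cover ($k$-PVC) of $G$ is a set $S$ of vertices such that every path on $k$ vertices in $G$ contains at least one vertex of $S$ (if $G$ has no path on $k$ vertices, the empty set is a $k$-PVC). $\psi_k(G)$ denotes the minimum cardinality of a $k$-PVC of $G$. $N(v)$ is the neighbourhood and $d(v)$ the degree of a vertex $v$. *)

From mathcomp Require Import all_boot.
Set Implicit Arguments. Unset Strict Implicit. Unset Printing Implicit Defensive.

Definition simple_graph (T : finType) (e : rel T) : Prop :=
  symmetric e /\ irreflexive e.

Definition connected_graph (T : finType) (e : rel T) : Prop :=
  forall x y : T, connect e x y.

Definition is_kpath (T : finType) (e : rel T) (k : nat) (s : k.-tuple T) : bool :=
  uniq s && (if tval s is x :: s' then path e x s' else true).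

Definition is_kpvc (T : finType) (e : rel T) (k : nat) (S : {set T}) : bool :=
  [forall s : k.-tuple T, is_kpath e s ==> has (mem S) s].

(* psi_k(G): the minimum cardinality of a k-PVC (setT is always one for k >= 1). *)
Definition psi (T : finType) (e : rel T) (k : nat) : nat :=
  \big[minn/#|T|]_(S : {set T} | is_kpvc e k S) #|S|.

Definition deg (T : finType) (e : rel T) (v : T) : nat := #|[set y | e v y]|.

(* Since psi_n(G) = 0, G has no Hamiltonian path, and each claimed non-edge is
   refuted by the Hamiltonian path it would create: e.g. if q ~ p_i and
   p_1 ~ p_(i+1), then q p_i p_(i-1) ... p_1 p_(i+1) ... p_(n-1) is one.
   Reading the path p_1 ... p_(n-1) backwards turns each statement about p_1
   into the corresponding one about p_(n-1).  For (1): if p_1 had degree 1,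
   its neighbour p_2 would meet every path on n-1 vertices, so psi_(n-1)(G) <= 1. *)

From HB Require Import structures.
From mathcomp Require Import all_boot zify.

Set Implicit Arguments.
Unset Strict Implicit.
Unset Printing Implicit Defensive.

(* Lets the AC lemmas of bigop (e.g. bigD1) act on the minimum defining psi. *)
HB.instance Definition _ := SemiGroup.isComLaw.Build nat minn minnA minnC.

Lemma psi_le_card (T : finType) (e : rel T) k (S : {set T}) :
  is_kpvc e k S -> psi e k <= #|S|.
Proof. by move=> S_kpvc; rewrite /psi (bigD1 S) ?geq_minl. Qed.

Lemma psi_eq0_kpvc0 (T : finType) (e : rel T) k :
  0 < #|T| -> psi e k = 0 -> is_kpvc e k set0.
Proof.
move=> T_gt0; apply: contra_eqT => kpvc0; rewrite -lt0n.
apply: (big_ind (fun x => 0 < x)) => // [x y|S S_kpvc]; first by rewrite leq_min => ->.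
by rewrite card_gt0; apply: contraNneq kpvc0 => <-.
Qed.

Lemma psi_card_gt0 (T : finType) (e : rel T) x s :
  path e x s -> size s < #|T| -> (forall v, v \in x :: s) -> 0 < psi e #|T|.
Proof.
move=> xs_path s_small xs_all; rewrite lt0n; apply/negP => /eqP.
have T_gt0 : 0 < #|T| by apply/card_gt0P; exists x.
have card_xs : #|x :: s| = #|T| by apply: eq_card => v; rewrite xs_all.
have size_xs : size (x :: s) == #|T|.
  by rewrite eqn_leq s_small -card_xs card_size.
have xs_uniq : uniq (x :: s) by apply/card_uniqP; rewrite card_xs (eqP size_xs).
move=> /(psi_eq0_kpvc0 (e := e) T_gt0)/forallP/(_ (Tuple size_xs)).
rewrite /is_kpath /=; move: xs_uniq => /= -> /=; rewrite xs_path in_set0 /=.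
by case/hasP => y _; rewrite /= in_set0.
Qed.

Lemma path_mem_adj (T : eqType) (e : rel T) x s z : symmetric e ->
  path e x s -> s != [::] -> z \in x :: s -> exists2 y, y \in x :: s & e z y.
Proof.
move=> e_sym; elim: s x => [//|y s IH] x /= /andP[xy ys] _.
rewrite inE => /predU1P[->|zys]; first by exists y; rewrite ?mem_head ?inE ?eqxx ?orbT.
case: s IH ys zys => [|y' s] IH ys zys.
  by exists x; [rewrite mem_head | move: zys; rewrite inE => /eqP ->; rewrite e_sym].
by have [w w_in zw] := IH y ys isT zys; exists w; rewrite // inE w_in orbT.
Qed.

Lemma leaf_neighbour_kpvc (T : finType) (e : rel T) k a b :
  symmetric e -> #|T| = k.+1 -> 1 < k -> a != b ->
  (forall y, e a y -> y = b) -> is_kpvc e k [set b].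
Proof.
move=> e_sym card_T k_gt1 ab a_leaf; apply/forallP => t; apply/implyP.
move=> /andP[t_uniq t_path]; apply/hasP; exists b; rewrite ?inE //.
apply: contraT => b_out.
have a_in : a \in tval t.
  apply: contraT => a_out.
  have : #|t| <= #|~: [set a; b]|.
    apply/subset_leq_card/subsetP => y y_in; rewrite !inE.
    by apply/negP => /orP[] /eqP y_eq; [move: a_out | move: b_out]; rewrite -y_eq y_in.
  have := cardsC [set a; b].
  by rewrite (card_uniqP t_uniq) size_tuple cards2 ab card_T; lia.
move: (size_tuple t) t_path a_in b_out.
case: (tval t) => [|x [|y s]] size_t; try by rewrite -size_t in k_gt1.
move=> t_path a_in b_out.
have [z z_in /a_leaf zb] := path_mem_adj e_sym t_path isT a_in.
by rewrite -zb z_in in b_out.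
Qed.

Lemma deg_le1_adj (T : finType) (e : rel T) a b y :
  deg e a <= 1 -> e a b -> e a y -> y = b.
Proof.
move=> deg_a ab ay; apply/eqP; apply: contraTT deg_a => yb.
have : #|[set b; y]| <= deg e a.
  by apply/subset_leq_card/subsetP => z; rewrite !inE => /orP[] /eqP ->.
by rewrite cards2 eq_sym yb -ltnNge.
Qed.

Lemma psi_gt1_deg_gt1 (T : finType) (e : rel T) k a b :
  symmetric e -> #|T| = k.+1 -> 1 < k -> a != b -> e a b -> 1 < psi e k ->
  1 < deg e a.
Proof.
move=> e_sym card_T k_gt1 ab e_ab; rewrite !ltnNge; apply: contra => deg_a.
have := leaf_neighbour_kpvc e_sym card_T k_gt1 ab (fun y => deg_le1_adj deg_a e_ab).
by move/psi_le_card; rewrite cards1.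
Qed.

Lemma connect_neq_adj (T : finType) (e : rel T) x y :
  connect e x y -> x != y -> exists z, e x z.
Proof.
case/connectP => -[|z s] /= xzs ->; first by rewrite eqxx.
by case/andP: xzs => xz _; exists z.
Qed.

Section Segments.

Variables (T : eqType) (e : rel T) (m : nat) (p : nat -> T).
Hypothesis p_path : forall i, 0 < i < m -> e (p i) (p i.+1).

Definition up a b := map p (iota a (b.+1 - a)).
Definition down a b := map p (rev (iota b (a.+1 - b))).

Lemma size_up a b : size (up a b) = b.+1 - a.
Proof. by rewrite size_map size_iota. Qed.

Lemma size_down a b : size (down a b) = a.+1 - b.
Proof. by rewrite size_map size_rev size_iota. Qed.

Lemma mem_up a b j : a <= j <= b -> p j \in up a b.
Proof. by move=> ?; apply: map_f; rewrite mem_iota; lia. Qed.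

Lemma mem_down a b j : b <= j <= a -> p j \in down a b.
Proof. by move=> ?; apply: map_f; rewrite mem_rev mem_iota; lia. Qed.

Lemma last_up x a b : a <= b -> last x (up a b) = p b.
Proof.
move=> ab; rewrite /up (_ : b.+1 - a = b - a + 1); last lia.
by rewrite iotaD cats1 map_rcons last_rcons; congr p; lia.
Qed.

Lemma last_upS a b : a <= b -> last (p a) (up a.+1 b) = p b.
Proof.
by rewrite leq_eqVlt => /predU1P[<-|]; [rewrite /up subnn | apply: last_up].
Qed.

Lemma last_down x a b : b <= a -> last x (down a b) = p b.
Proof.
move=> ba; rewrite /down (_ : a.+1 - b = (a - b).+1) //; last lia.
by rewrite /= rev_cons map_rcons last_rcons.
Qed.

Lemma path_up x a b : 0 < a -> b <= m -> (a <= b -> e x (p a)) -> path e x (up a b).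
Proof.
rewrite /up; move Ek: (b.+1 - a) => k.
elim: k x a Ek => [//|k IH] x a Ek a0 bm xa /=.
rewrite xa; last lia.
apply: IH => //; first lia.
by move=> ?; apply: p_path; lia.
Qed.

Hypothesis e_sym : symmetric e.

Lemma path_down x a b : 0 < b -> a <= m -> (b <= a -> e x (p a)) -> path e x (down a b).
Proof.
rewrite /down; move Ek: (a.+1 - b) => k.
elim: k x a Ek => [//|k IH] x a Ek b0 am xa.
rewrite -addn1 iotaD cats1 rev_rcons /= (_ : b + k = a); last lia.
rewrite xa; last lia.
case: k IH Ek => [//|k] IH Ek.
apply: (IH _ a.-1) => //; [lia | lia | move=> ?].
have -> : p a = p a.-1.+1 by congr p; lia.
by rewrite e_sym; apply: p_path; lia.
Qed.

End Segments.

Definition covering_path (T : finType) (e : rel T) m (p : nat -> T) (q : T) : Prop :=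
  (forall i, 0 < i < m -> e (p i) (p i.+1)) /\
  (forall v, v = q \/ exists2 i, 0 < i <= m & v = p i).

Lemma covering_path_rev (T : finType) (e : rel T) m p q :
  symmetric e -> covering_path e m p q -> covering_path e m (fun i => p (m.+1 - i)) q.
Proof.
move=> e_sym [p_path p_cover]; split=> [i i_range | v].
  by rewrite e_sym (_ : m.+1 - i = (m.+1 - i.+1).+1); [apply: p_path | ]; lia.
have [->|[i i_range ->]] := p_cover v; [by left | right].
by exists (m.+1 - i); [lia | congr p; lia].
Qed.

Lemma covering_path_q_adj (T : finType) (e : rel T) m p q :
  irreflexive e -> covering_path e m p q -> connect e q (p 1) -> q != p 1 ->
  exists2 i, 0 < i <= m & e q (p i).
Proof.
move=> e_irr p_cov /connect_neq_adj q_adj /q_adj[z qz].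
have [zq | [i i_range zpi]] := p_cov.2 z; first by rewrite zq e_irr in qz.
by exists i; rewrite // -zpi.
Qed.

Section NonEdges.

Variables (T : finType) (e : rel T) (m : nat) (p : nat -> T) (q : T).
Hypotheses (e_sym : symmetric e) (card_T : #|T| = m.+1).
Hypotheses (no_ham : psi e #|T| = 0) (p_cov : covering_path e m p q).

Let p_path := p_cov.1.

Ltac mem_segments :=
  match goal with
  | |- is_true (_ || _) => apply/orP; first [left; mem_segments | right; mem_segments]
  | |- is_true (_ \in _ :: _) => rewrite inE; mem_segments
  | |- is_true (_ \in _ ++ _) => rewrite mem_cat; mem_segments
  | |- is_true (p _ \in up p _ _) => apply: mem_up; lia
  | |- is_true (p _ \in down p _ _) => apply: mem_down; lia
  | |- is_true (?x == ?x) => exact: eqxx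
  | |- is_true (p _ == p _) => apply/eqP; congr p; lia
  end.

Lemma no_spanning_path x s : path e x s -> size s = m ->
  q \in x :: s -> (forall j, 0 < j <= m -> p j \in x :: s) -> False.
Proof.
move=> xs_path size_s q_in p_in.
suff : 0 < psi e #|T| by rewrite no_ham.
apply: (psi_card_gt0 xs_path); first by rewrite card_T size_s.
by move=> v; have [->|[j j_range ->]] := p_cov.2 v; last apply: p_in.
Qed.

Lemma nadj_q_first : ~~ e q (p 1).
Proof.
apply/negP => qp1; apply: (@no_spanning_path q (up p 1 m)).
- by apply: path_up p_path _ _ _ _ _ (fun _ => qp1).
- by rewrite size_up; lia.
- by mem_segments.
- by move=> j ?; mem_segments.
Qed.

Lemma nadj_q_consecutive i : 0 < i < m -> e q (p i) -> ~~ e q (p i.+1).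
Proof.
move=> i_range qpi; apply/negP => qpi1.
apply: (@no_spanning_path (p 1) (up p 2 i ++ q :: up p i.+1 m)).
- rewrite cat_path last_upS /=; last lia.
  apply/and3P; split; [|by rewrite e_sym|].
  + by apply: (path_up p_path) => // [|?]; [|apply: p_path]; lia.
  + by apply: (path_up p_path) => //; lia.
- by rewrite size_cat /= !size_up; lia.
- by mem_segments.
- move=> j ?; case: (ltnP 1 j) => ?; first case: (leqP j i) => ?; by mem_segments.
Qed.

Lemma nadj_first_last i : 0 < i <= m -> e q (p i) -> ~~ e (p 1) (p m).
Proof.
move=> i_range qpi; apply/negP => p1m.
apply: (@no_spanning_path q (up p i m ++ up p 1 i.-1)).
- rewrite cat_path last_up; last lia.
  apply/andP; split; apply: (path_up p_path) => //; try lia.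
  by rewrite e_sym.
- by rewrite size_cat !size_up; lia.
- by mem_segments.
- move=> j ?; case: (leqP i j) => ?; by mem_segments.
Qed.

Lemma nadj_first_succ i : 0 < i < m -> e q (p i) -> ~~ e (p 1) (p i.+1).
Proof.
move=> i_range qpi; apply/negP => p1i1.
apply: (@no_spanning_path q (down p i 1 ++ up p i.+1 m)).
- rewrite cat_path last_down; last lia.
  apply/andP; split; [apply: (path_down p_path) | apply: (path_up p_path)] => //; lia.
- by rewrite size_cat size_down size_up; lia.
- by mem_segments.
- move=> j ?; case: (leqP j i) => ?; by mem_segments.
Qed.

Lemma nadj_first_pred i' i : 0 < i' < i -> i < m -> e q (p i') -> e q (p i) ->
  ~~ e (p 1) (p i.-1).
Proof.
move=> i'_range i_lt qpi' qpi; apply/negP => p1i.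
apply: (@no_spanning_path (p m) (down p m.-1 i ++ q :: down p i' 1 ++ down p i.-1 i'.+1)).
- rewrite cat_path last_down /=; last lia.
  rewrite cat_path last_down; last lia.
  apply/and4P; split; last 2 first.
  + by apply: (path_down p_path e_sym) => //; lia.
  + by apply: (path_down p_path e_sym) => //; lia.
  + apply: (path_down p_path e_sym); [lia | lia | move=> ?].
    by rewrite e_sym (_ : m = m.-1.+1); [apply: p_path | ]; lia.
  + by rewrite e_sym.
- by rewrite size_cat /= size_cat !size_down; lia.
- by mem_segments.
- move=> j ?; case: (leqP i j) => ?; [case: (ltnP j m) | case: (leqP j i')] => ?;
  by mem_segments.
Qed.

End NonEdges.

Section MirrorNonEdges.

Variables (T : finType) (e : rel T) (m : nat) (p : nat -> T) (q : T).
Hypotheses (e_sym : symmetric e) (card_T : #|T| = m.+1).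
Hypotheses (no_ham : psi e #|T| = 0) (p_cov : covering_path e m p q).

Let rp_cov := covering_path_rev e_sym p_cov.

Lemma nadj_q_last : ~~ e q (p m).
Proof. by have := nadj_q_first card_T no_ham rp_cov; rewrite subn1. Qed.

Lemma nadj_last_pred i : 1 < i <= m -> e q (p i) -> ~~ e (p m) (p i.-1).
Proof.
move=> i_range qpi.
have := nadj_first_succ e_sym card_T no_ham rp_cov (i := m.+1 - i).
rewrite subn1 subKn; last lia.
have -> : m.+1 - (m.+1 - i).+1 = i.-1 by lia.
by apply; lia.
Qed.

Lemma nadj_last_succ i i' : 1 < i < i' -> i' <= m -> e q (p i) -> e q (p i') ->
  ~~ e (p m) (p i.+1).
Proof.
move=> i_range i'_le qpi qpi'.
have := nadj_first_pred e_sym card_T no_ham rp_cov (i' := m.+1 - i') (i := m.+1 - i).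
rewrite subn1 !subKn; try lia.
have -> : m.+1 - (m.+1 - i).-1 = i.+1 by lia.
by apply; lia.
Qed.

Lemma adj_q_inner i : 0 < i <= m -> e q (p i) -> 1 < i < m.
Proof.
move=> i_range qpi.
have i1 : i != 1 by apply: contraNneq (nadj_q_first card_T no_ham p_cov) => <-.
have im : i != m by apply: contraNneq nadj_q_last => <-.
lia.
Qed.

End MirrorNonEdges.

Theorem mainTheorem11 (T : finType) (e : rel T) (n : nat) (p : nat -> T) (q : T)
  (Hsimple : simple_graph e)
  (Hconn : connected_graph e)
  (Hn : 4 <= n)
  (HcardT : #|T| = n)
  (Hpinj : forall i j, 1 <= i <= n.-1 -> 1 <= j <= n.-1 -> p i = p j -> i = j)
  (Hpq : forall i, 1 <= i <= n.-1 -> p i != q)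
  (Hcover : forall v : T, v = q \/ exists2 i, 1 <= i <= n.-1 & v = p i)
  (Hpath : forall i, 1 <= i < n.-1 -> e (p i) (p i.+1))
  (Hpsi1 : psi e n.-1 = 2)
  (Hpsi0 : psi e n = 0) :
  (* (1) *)
  (2 <= deg e (p 1) /\ 2 <= deg e (p n.-1)) /\
  (* (2) *)
  (~~ e (p 1) (p n.-1) /\ ~~ e q (p 1) /\ ~~ e q (p n.-1) /\
   (forall i, 2 <= i <= n.-2 -> e q (p i) -> ~~ e q (p i.+1))) /\
  (* (3) *)
  (forall i, 1 <= i <= n.-1 -> e q (p i) ->
     ~~ e (p 1) (p i.+1) /\ ~~ e (p n.-1) (p i.-1)) /\
  (* (4) *)
  (forall i, 1 <= i <= n.-1 -> e q (p i) ->
     (exists2 i', (1 <= i' <= n.-1) && (i' < i) & e q (p i')) ->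
     ~~ e (p 1) (p i.-1)) /\
  (forall i, 1 <= i <= n.-1 -> e q (p i) ->
     (exists2 i', (1 <= i' <= n.-1) && (i < i') & e q (p i')) ->
     ~~ e (p n.-1) (p i.+1)).
Proof.
have [e_sym e_irr] := Hsimple.
have p_cov : covering_path e n.-1 p q := conj Hpath Hcover.
have card_T : #|T| = n.-1.+1 by rewrite HcardT; lia.
have no_ham : psi e #|T| = 0 by rewrite HcardT.
have q_p1 : q != p 1 by rewrite eq_sym Hpq //; lia.
have [i0 i0_range qpi0] := covering_path_q_adj e_irr p_cov (Hconn q (p 1)) q_p1.
have q_inner := adj_q_inner e_sym card_T no_ham p_cov.
have deg_gt1 a b : 0 < a <= n.-1 -> 0 < b <= n.-1 -> a != b -> e (p a) (p b) ->
    1 < deg e (p a).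
  move=> a_range b_range ab pab.
  apply: (psi_gt1_deg_gt1 e_sym card_T _ _ pab); [lia | | by rewrite Hpsi1].
  by apply: contra ab => /eqP /(Hpinj a b a_range b_range) ->.
split; [split | split; [split; [ | split; [ | split]] | split; [ | split]]].
- by apply: (deg_gt1 1 2) => //; [lia | lia | apply: Hpath; lia].
- apply: (deg_gt1 _ n.-2) => //; [lia | lia | lia | ].
  by rewrite e_sym (_ : n.-1 = n.-2.+1); [apply: Hpath | ]; lia.
- exact: (nadj_first_last e_sym card_T no_ham p_cov i0_range qpi0).
- exact: (nadj_q_first card_T no_ham p_cov).
- exact: (nadj_q_last e_sym card_T no_ham p_cov).
- by move=> i i_range; apply: (nadj_q_consecutive e_sym card_T no_ham p_cov); lia.
- move=> i i_range qpi; have i_inner := q_inner i i_range qpi.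
  split; [apply: (nadj_first_succ e_sym card_T no_ham p_cov _ qpi)
         | apply: (nadj_last_pred e_sym card_T no_ham p_cov _ qpi)]; lia.
- move=> i i_range qpi [i' /andP[i'_range i'_lt] qpi'].
  have i_inner := q_inner i i_range qpi.
  by apply: (nadj_first_pred e_sym card_T no_ham p_cov _ _ qpi' qpi); lia.
- move=> i i_range qpi [i' /andP[i'_range i'_gt] qpi'].
  have i_inner := q_inner i i_range qpi.
  by apply: (nadj_last_succ e_sym card_T no_ham p_cov _ _ qpi qpi'); lia.
Qed.
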